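(* For $q^ip^j\in\mathcal{C}(p,q)$ and $n\in\omega$ let $O_n(q^ip^j)=\{q^ip^j\}\cup\big(\downarrow_{\preceq}q^{i+n}p^{j+n}\setminus\{q^{i+n}p^{j+n}\}\big)$, and let $\tau_2$ be the topology on $\mathcal{C}(p,q)$ generated by the neighbourhood bases $\{O_n(q^ip^j):n\in\omega\}$ at each point. Then $(\mathcal{C}(p,q),\tau_2)$ is a $T_1$ locally compact topological inverse semigroup.
   Context: The bicyclic monoid $\mathcal{C}(p,q)$ is the monoid generated by $p,q$ subject only to $pq=1$; elements are uniquely $q^ip^j$, $i,j\in\omega$, with multiplication $q^kp^l\cdot q^mp^n = q^{k-l+m}p^n$ if $l<m$, $=q^kp^n$ if $l=m$, $=q^kp^{l-m+n}$ if $l>m$, and inversion $(q^ip^j)^{-1}=q^jp^i$. The natural partial order: $q^ip^j\preceq q^sp^t$ iff $i\ge s$ and $i-j=s-t$; $\downarrow_{\preceq}x=\{y:y\preceq x\}$, so $\downarrow_{\preceq}q^ap^b=\{q^{a+k}p^{b+k}:k\in\omega\}$. A topological inverse semigroup is an inverse semigroup with a topology making multiplication jointly continuous and inversion continuous; locally compact means every point has a compact neighbourhood. *)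

From HB Require Import structures.
From mathcomp Require Import all_boot all_order.
From mathcomp Require Import all_algebra zify.
From mathcomp Require Import all_classical all_reals all_analysis.
Set Implicit Arguments. Unset Strict Implicit. Unset Printing Implicit Defensive.
Local Open Scope classical_set_scope.

(* The bicyclic monoid C(p,q): the element q^i p^j is represented by (i, j). *)
Definition bicyclic : Type := (nat * nat)%type.
HB.instance Definition _ := Choice.on bicyclic.

Definition bq (i j : nat) : bicyclic := (i, j).

Definition bmul (x y : bicyclic) : bicyclic :=
  let: (k, l) := x in let: (m, n) := y in
  if l < m then (k + (m - l), n)%N
  else if l == m then (k, n)
  else (k, l - m + n)%N.

Definition binv (x : bicyclic) : bicyclic := (x.2, x.1).

(* natural partial order: q^i p^j <= q^s p^t iff i >= s and i - j = s - t
   (the integer equation i - j = s - t is written i + t = s + j in nat) *)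
Definition ble (x y : bicyclic) : Prop :=
  (y.1 <= x.1)%N /\ (x.1 + y.2 = y.1 + x.2)%N.

Definition bdown (x : bicyclic) : set bicyclic := [set y | ble y x].

Definition O_nbhd (n : nat) (x : bicyclic) : set bicyclic :=
  [set x] `|` (bdown (x.1 + n, x.2 + n)%N `\` [set (x.1 + n, x.2 + n)%N]).

Definition tau2_open (A : set bicyclic) : Prop :=
  forall x, A x -> exists n, O_nbhd n x `<=` A.

Lemma tau2_openT : tau2_open setT.
Proof. by move=> x _; exists 0%N. Qed.

Lemma O_nbhd_mono (k n : nat) (x : bicyclic) : (k <= n)%N ->
  O_nbhd n x `<=` O_nbhd k x.
Proof.
case: x => a b /= hk z [->|[[/= hz1 hz2] hzne]]; first by left.
right; split.
  split => /=; last by lia.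
  by lia.
move=> /= heq; apply: hzne; case: z heq hz1 hz2 => c d /= [-> ->] hz1 hz2.
suff -> : n = k by [].
by lia.
Qed.

Lemma tau2_openI : setI_closed tau2_open.
Proof.
move=> A B oA oB x [Ax Bx].
have [n hn] := oA x Ax; have [m hm] := oB x Bx.
exists (maxn n m) => y hy; split.
  by apply: hn; apply: (O_nbhd_mono (leq_maxl n m)).
by apply: hm; apply: (O_nbhd_mono (leq_maxr n m)).
Qed.

Lemma tau2_open_bigU (I : Type) (f : I -> set bicyclic) :
  (forall i, tau2_open (f i)) -> tau2_open (\bigcup_i f i).
Proof.
move=> h x [i _ fxi]; have [n hn] := h i x fxi.
by exists n => y /hn fy; exists i.
Qed.

HB.instance Definition _ :=
  isOpenTopological.Build bicyclic tau2_openT tau2_openI tau2_open_bigU.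

Definition inverse_semigroup (S : Type) (mul : S -> S -> S) (inv : S -> S) :=
  associative mul /\
  forall x : S, [/\ mul (mul x (inv x)) x = x,
                    mul (mul (inv x) x) (inv x) = inv x &
                    forall y, mul (mul x y) x = x -> mul (mul y x) y = y -> y = inv x].

Definition topological_inverse_semigroup (S : topologicalType)
    (mul : S -> S -> S) (inv : S -> S) :=
  [/\ inverse_semigroup mul inv,
      continuous (fun xy : S * S => mul xy.1 xy.2) &
      continuous inv].

Definition locally_compact_space (S : topologicalType) :=
  forall x : S, exists K : set S, nbhs x K /\ compact K.

(** In coordinates, [O_n(q^i p^j)] is [q^i p^j] together with the
    [q^(i+k) p^(j+k)] for [k > n], so every statement about these sets is
    linear arithmetic; each [O_n(x)] is open, hence they form a base of
    [tau_2] at [x].  Moving a factor of [xy] down its diagonal by [k] moves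
    [xy] down its own diagonal by at least [k] minus the exponents of [x] and
    [y], which gives joint continuity; inversion swaps coordinates and maps
    [O_n(x)] onto [O_n(x^-1)].  Finally [O_0(x)] is the range of the sequence
    [q^(i+k) p^(j+k)], which converges to [x], and a convergent sequence
    together with its limit is compact. *)
From HB Require Import structures.
From mathcomp Require Import all_boot all_order all_algebra zify.
From mathcomp Require Import all_classical all_reals all_analysis.
Local Open Scope classical_set_scope.

Lemma compact_cvg_range (T : topologicalType) (u : nat -> T) (x : T) :
  u @ \oo --> x -> compact (x |` range u).
Proof.
move=> ux F FF FK.
have [clx|/existsNP [B /existsNP [C]]] := pselect (cluster F x).
  by exists x; split => //; left.
move=> /not_implyP [FB /not_implyP [Cx /set0P/negP/negbNE/eqP BC0]].
have notBC z : B z -> C z -> False.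
  by move=> Bz Cz; suff : (B `&` C) z by rewrite BC0.
have [N _ uC] : \forall n \near \oo, C (u n) := ux C Cx.
have F_head : F (u @` `I_N).
  apply: filterS (filterI FK FB) => _ [[->|[n _ <-]] Bz].
    by case: (notBC x) => //; apply: nbhs_singleton.
  have [nN|Nn] := ltnP n N; first by exists n.
  by case: (notBC (u n)) => //; apply: uC.
have [p [[n _ <-] clp]] := finite_compact (finite_image u (finite_II N)) FF F_head.
by exists (u n); split => //; right; exists n.
Qed.

Lemma bmulE (x y : bicyclic) :
  bmul x y = (x.1 + (y.1 - x.2), (x.2 - y.1) + y.2)%N.
Proof.
case: x y => k l [m n]; rewrite /bmul /=.
by case: ltnP => [lm|ml]; [|case: eqP => lm]; congr pair; lia.
Qed.

Lemma bmulA : associative bmul.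
Proof. by move=> [a b] [c d] [e f]; rewrite !bmulE /=; congr pair; lia. Qed.

Lemma bicyclic_inverse_semigroup : inverse_semigroup bmul binv.
Proof.
split=> [|[a b]]; first exact: bmulA.
rewrite /binv; split; try by rewrite !bmulE /=; congr pair; lia.
by move=> [c d]; rewrite !bmulE /= => -[e1 e2] [e3 e4]; congr pair; lia.
Qed.

Lemma O_nbhdP n (x z : bicyclic) : O_nbhd n x z <->
  (z.1 = x.1 /\ z.2 = x.2) \/ (x.1 + n < z.1 /\ z.1 + x.2 = x.1 + z.2)%N.
Proof.
case: x z => a b [c d] /=; split.
  case=> [[-> ->]|[[/= ca e] ne]]; [by left | right].
  have : c <> (a + n)%N by move=> ca'; apply: ne; congr pair; lia.
  lia.
case=> [[-> ->]|[ac e]]; [by left | right].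
by split; [split=> /=|case]; lia.
Qed.

Lemma open_O_nbhd n x : open (O_nbhd n x).
Proof.
move=> z /O_nbhdP [zx|xz]; first by exists n => w /O_nbhdP xw; apply/O_nbhdP; lia.
by exists 0%N => w /O_nbhdP zw; apply/O_nbhdP; right; lia.
Qed.

Lemma nbhs_bicyclicP (x : bicyclic) (B : set bicyclic) :
  nbhs x B <-> exists n, O_nbhd n x `<=` B.
Proof.
rewrite nbhsE; split=> [[C [oC Cx] CB]|[n OB]].
  by have [n OC] := oC x Cx; exists n => z /OC /CB.
by exists (O_nbhd n x) => //; split; [exact: open_O_nbhd | left].
Qed.

Lemma O_nbhd_bmul n (x y z w : bicyclic) :
  O_nbhd (n + x.1 + x.2 + y.1 + y.2) x z ->
  O_nbhd (n + x.1 + x.2 + y.1 + y.2) y w ->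
  O_nbhd n (bmul x y) (bmul z w).
Proof.
move=> /O_nbhdP xz /O_nbhdP yw; apply/O_nbhdP; rewrite !bmulE /= in xz yw *.
lia.
Qed.

Lemma O_nbhd_binv n (x z : bicyclic) :
  O_nbhd n x z -> O_nbhd n (binv x) (binv z).
Proof. by move=> /O_nbhdP xz; apply/O_nbhdP; rewrite /binv /=; lia. Qed.

Lemma continuous_bmul : continuous (fun xy : bicyclic * bicyclic => bmul xy.1 xy.2).
Proof.
move=> [x y] B /nbhs_bicyclicP [n OB].
pose m := (n + x.1 + x.2 + y.1 + y.2)%N.
exists (O_nbhd m x, O_nbhd m y); first by split; apply/nbhs_bicyclicP; exists m.
by move=> [z w] [/= xz yw]; apply/OB/O_nbhd_bmul.
Qed.

Lemma continuous_binv : continuous binv.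
Proof.
move=> x B /nbhs_bicyclicP [n OB]; apply/nbhs_bicyclicP.
by exists n => z /O_nbhd_binv; apply: OB.
Qed.

Lemma bicyclic_accessible : accessible_space bicyclic.
Proof.
move=> x y /eqP xy; exists (O_nbhd y.1 x); split; first exact: open_O_nbhd.
  by rewrite in_setE; left.
rewrite in_setE => /O_nbhdP [[e1 e2]|]; last by lia.
by apply: xy; case: x y e1 e2 => ? ? [? ?] /= -> ->.
Qed.

Definition bshift (x : bicyclic) (k : nat) : bicyclic := (x.1 + k, x.2 + k)%N.

Lemma bshift_cvg x : bshift x @ \oo --> x.
Proof.
move=> B /nbhs_bicyclicP [n OB]; exists n.+1 => // k /= nk.
by apply/OB/O_nbhdP; rewrite /bshift /=; lia.
Qed.

Lemma O_nbhd0E x : O_nbhd 0 x = x |` range (bshift x).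
Proof.
apply/seteqP; split=> z.
  move=> /O_nbhdP [[e1 e2]|xz]; first by left; case: x z e1 e2 => ? ? [? ?] /= -> ->.
  right; exists (z.1 - x.1)%N => //; rewrite /bshift.
  by case: z xz => c d /= xz; congr pair; lia.
by move=> [->|[k _ <-]]; apply/O_nbhdP; rewrite /bshift /=; lia.
Qed.

Lemma bicyclic_locally_compact : locally_compact_space bicyclic.
Proof.
move=> x; exists (O_nbhd 0 x); split; first by apply/nbhs_bicyclicP; exists 0%N.
by rewrite O_nbhd0E; apply/compact_cvg_range/bshift_cvg.
Qed.

Theorem proposition2 :
  @accessible_space bicyclic /\
  locally_compact_space bicyclic /\
  topological_inverse_semigroup bmul binv.
Proof.
split; first exact: bicyclic_accessible.
split; first exact: bicyclic_locally_compact.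
split; [exact: bicyclic_inverse_semigroup | exact: continuous_bmul | exact: continuous_binv].
Qed.
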